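(* (Reliability/soundness of KEDL.) For every set $\Gamma$ of KEDL concepts and every KEDL concept $\phi$: if $\Gamma\vdash\phi$ then $\Gamma\models\phi$.
   Context: KEDL syntax. Fix countable pairwise disjoint sets of object concept names, attribute concept names, and role names $\mathbf P$ (object–object), $\mathbf Q$ (attribute–attribute), $\mathbf R$ (object–attribute); $r^-$ is the inverse of $r\in\mathbf R$. Object concepts $\Phi$ and attribute concepts $\Omega$ are the least sets such that: object concept names, $\top,\bot\in\Phi$; attribute concept names $\in\Omega$; $C,D\in\Phi\Rightarrow\neg C,C\sqcap D,C\sqcup D\in\Phi$; $p\in\mathbf P,C\in\Phi\Rightarrow\forall p.C,\exists p.C\in\Phi$; $r\in\mathbf R,A\in\Omega\Rightarrow\forall r.A,\exists r.A\in\Phi$; $A,B\in\Omega\Rightarrow\neg A,A\sqcap B,A\sqcup B\in\Omega$; $q\in\mathbf Q,A\in\Omega\Rightarrow\forall q.A,\exists q.A\in\Omega$; $r\in\mathbf R,C\in\Phi\Rightarrow\forall r^-.C,\exists r^-.C\in\Omega$. For same-sort $\phi,\psi$, $\phi\to\psi$ stands for $\neg\phi\sqcup\psi$ and $\phi\leftrightarrow\psi$ for $(\phi\to\psi)\sqcap(\psi\to\phi)$. KEDL model $M=(\Delta^I,\Sigma^I,\cdot^I)$: $\Delta^I,\Sigma^I$ nonempty; object concept names $\mapsto$ subsets of $\Delta^I$, attribute concept names $\mapsto$ subsets of $\Sigma^I$, $p^I\subseteq\Delta^I\times\Delta^I$, $q^I\subseteq\Sigma^I\times\Sigma^I$, $r^I\subseteq\Delta^I\times\Sigma^I$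 with each $x\in\Delta^I$ having exactly one $r^I$-successor; $(r^-)^I$ is the converse of $r^I$. Extension: $\top^I=\Delta^I,\bot^I=\emptyset$; complement relative to the domain of the sort; $\sqcap,\sqcup$ as $\cap,\cup$; $(\forall s.E)^I=\{x:\forall y((x,y)\in s^I\Rightarrow y\in E^I)\}$, $(\exists s.E)^I=\{x:\exists y((x,y)\in s^I\wedge y\in E^I)\}$ for $s\in\mathbf P\cup\mathbf Q\cup\mathbf R\cup\{r^-\}$, $x$ ranging over the domain of the source sort of $s$. A concept is valid in $M$ if its interpretation is the whole domain of its sort. $\Gamma\models\phi$: in every model where all members of $\Gamma$ are valid, $\phi$ is valid. Deduction: $\Gamma\vdash\phi$ iff there is a finite sequence $\phi_1,\dots,\phi_n=\phi$ where each $\phi_k$ is a member of $\Gamma$, or an instance of an axiom scheme (A1)–(A17), or follows by modus ponens from earlier $\phi_i$ and $\phi_j=\phi_i\to\phi_k$, or follows from earlier members by rule (R19) (from $\alpha\to\beta$, $\beta\to\alpha$ infer $\alpha\leftrightarrow\beta$), (R20) (from $\alpha\to\beta$, $\beta\to\gamma$ infer $\alpha\to\gamma$), or (R21) (from $\alpha\to\beta\sqcap\gamma$ infer $\alpha\to\beta$ and $\alpha\to\gamma$, and conversely). Axiom schemes (same-sort $\phi,\psi,\gamma$; $C,D\in\Phi$; $A,B\in\Omega$): (A1) $\phi\to(\psi\to\phi)$; (A2) $(\phi\to(\psi\to\gamma))\to((\phi\to\psi)\to(\phi\to\gamma))$; (A3) $(\neg\phi\to\neg\psi)\to(\psi\to\phi)$;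 for $(s,E,F)$ equal to $(p,C,D)$ [A4–A6], $(q,A,B)$ [A7–A9], $(r,A,B)$ [A10–A12], $(r^-,C,D)$ [A13–A15]: $(\exists s.E\sqcup\exists s.F)\to\exists s.(E\sqcup F)$, $\exists s.(E\sqcap F)\to(\exists s.E\sqcap\exists s.F)$, $(\exists s.E\sqcap\forall s.F)\to\exists s.(E\sqcap F)$; (A16) $\exists r^-.\forall r.A\to A$; (A17) $\exists r.\forall r^-.C\to C$. *)

(* Names: object concept names, attribute concept names, and role names in
   P (object-object), Q (attribute-attribute), R (object-attribute), each a
   countable set represented by nat; disjointness is by the constructors. *)

Inductive oconcept : Type :=
| ONm    : nat -> oconcept
| OTop   : oconcept
| OBot   : oconcept
| ONeg   : oconcept -> oconcept
| OAnd   : oconcept -> oconcept -> oconcept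
| OOr    : oconcept -> oconcept -> oconcept
| OAllP  : nat -> oconcept -> oconcept
| OExP   : nat -> oconcept -> oconcept
| OAllR  : nat -> aconcept -> oconcept
| OExR   : nat -> aconcept -> oconcept
with aconcept : Type :=
| ANm    : nat -> aconcept
| ANeg   : aconcept -> aconcept
| AAnd   : aconcept -> aconcept -> aconcept
| AOr    : aconcept -> aconcept -> aconcept
| AAllQ  : nat -> aconcept -> aconcept
| AExQ   : nat -> aconcept -> aconcept
| AAllRi : nat -> oconcept -> aconcept
| AExRi  : nat -> oconcept -> aconcept.

Inductive concept : Type :=
| Obj : oconcept -> concept
| Att : aconcept -> concept.

Definition oimp (C D : oconcept) : oconcept := OOr (ONeg C) D.
Definition aimp (A B : aconcept) : aconcept := AOr (ANeg A) B.
Definition oiff (C D : oconcept) : oconcept := OAnd (oimp C D) (oimp D C).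
Definition aiff (A B : aconcept) : aconcept := AAnd (aimp A B) (aimp B A).

Record model : Type := {
  Dom : Type;
  Sig : Type;
  Dom_ne : inhabited Dom;
  Sig_ne : inhabited Sig;
  iO : nat -> Dom -> Prop;
  iA : nat -> Sig -> Prop;
  iP : nat -> Dom -> Dom -> Prop;
  iQ : nat -> Sig -> Sig -> Prop;
  iR : nat -> Dom -> Sig -> Prop;
  iR_fun : forall r x, exists! y, iR r x y
}.

Fixpoint oext (M : model) (C : oconcept) : Dom M -> Prop :=
  match C with
  | ONm n => fun x => iO M n x
  | OTop => fun _ => True
  | OBot => fun _ => False
  | ONeg C => fun x => ~ oext M C x
  | OAnd C D => fun x => oext M C x /\ oext M D x
  | OOr C D => fun x => oext M C x \/ oext M D x
  | OAllP p C => fun x => forall y, iP M p x y -> oext M C y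
  | OExP p C => fun x => exists y, iP M p x y /\ oext M C y
  | OAllR r A => fun x => forall y, iR M r x y -> aext M A y
  | OExR r A => fun x => exists y, iR M r x y /\ aext M A y
  end
with aext (M : model) (A : aconcept) : Sig M -> Prop :=
  match A with
  | ANm n => fun y => iA M n y
  | ANeg A => fun y => ~ aext M A y
  | AAnd A B => fun y => aext M A y /\ aext M B y
  | AOr A B => fun y => aext M A y \/ aext M B y
  | AAllQ q A => fun y => forall z, iQ M q y z -> aext M A z
  | AExQ q A => fun y => exists z, iQ M q y z /\ aext M A z
  | AAllRi r C => fun y => forall x, iR M r x y -> oext M C x
  | AExRi r C => fun y => exists x, iR M r x y /\ oext M C x
  end.

Definition valid (M : model) (phi : concept) : Prop :=
  match phi with
  | Obj C => forall x : Dom M, oext M C x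
  | Att A => forall y : Sig M, aext M A y
  end.

Definition entails (Gamma : concept -> Prop) (phi : concept) : Prop :=
  forall M : model, (forall psi, Gamma psi -> valid M psi) -> valid M phi.

(* Derivability: the least set containing Gamma and the axiom instances
   (A1)-(A17) and closed under MP, (R19), (R20), (R21). This is equivalent to
   the existence of a finite derivation sequence. *)
Inductive derivable (Gamma : concept -> Prop) : concept -> Prop :=
| d_hyp : forall phi, Gamma phi -> derivable Gamma phi
| d_A1o : forall C D, derivable Gamma (Obj (oimp C (oimp D C)))
| d_A2o : forall C D E, derivable Gamma
    (Obj (oimp (oimp C (oimp D E)) (oimp (oimp C D) (oimp C E))))
| d_A3o : forall C D, derivable Gamma
    (Obj (oimp (oimp (ONeg C) (ONeg D)) (oimp D C)))
| d_A1a : forall A B, derivable Gamma (Att (aimp A (aimp B A)))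
| d_A2a : forall A B E, derivable Gamma
    (Att (aimp (aimp A (aimp B E)) (aimp (aimp A B) (aimp A E))))
| d_A3a : forall A B, derivable Gamma
    (Att (aimp (aimp (ANeg A) (ANeg B)) (aimp B A)))
| d_A4 : forall p C D, derivable Gamma
    (Obj (oimp (OOr (OExP p C) (OExP p D)) (OExP p (OOr C D))))
| d_A5 : forall p C D, derivable Gamma
    (Obj (oimp (OExP p (OAnd C D)) (OAnd (OExP p C) (OExP p D))))
| d_A6 : forall p C D, derivable Gamma
    (Obj (oimp (OAnd (OExP p C) (OAllP p D)) (OExP p (OAnd C D))))
| d_A7 : forall q A B, derivable Gamma
    (Att (aimp (AOr (AExQ q A) (AExQ q B)) (AExQ q (AOr A B))))
| d_A8 : forall q A B, derivable Gamma
    (Att (aimp (AExQ q (AAnd A B)) (AAnd (AExQ q A) (AExQ q B))))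
| d_A9 : forall q A B, derivable Gamma
    (Att (aimp (AAnd (AExQ q A) (AAllQ q B)) (AExQ q (AAnd A B))))
| d_A10 : forall r A B, derivable Gamma
    (Obj (oimp (OOr (OExR r A) (OExR r B)) (OExR r (AOr A B))))
| d_A11 : forall r A B, derivable Gamma
    (Obj (oimp (OExR r (AAnd A B)) (OAnd (OExR r A) (OExR r B))))
| d_A12 : forall r A B, derivable Gamma
    (Obj (oimp (OAnd (OExR r A) (OAllR r B)) (OExR r (AAnd A B))))
| d_A13 : forall r C D, derivable Gamma
    (Att (aimp (AOr (AExRi r C) (AExRi r D)) (AExRi r (OOr C D))))
| d_A14 : forall r C D, derivable Gamma
    (Att (aimp (AExRi r (OAnd C D)) (AAnd (AExRi r C) (AExRi r D))))
| d_A15 : forall r C D, derivable Gamma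
    (Att (aimp (AAnd (AExRi r C) (AAllRi r D)) (AExRi r (OAnd C D))))
| d_A16 : forall r A, derivable Gamma (Att (aimp (AExRi r (OAllR r A)) A))
| d_A17 : forall r C, derivable Gamma (Obj (oimp (OExR r (AAllRi r C)) C))
| d_MPo : forall C D, derivable Gamma (Obj C) ->
    derivable Gamma (Obj (oimp C D)) -> derivable Gamma (Obj D)
| d_MPa : forall A B, derivable Gamma (Att A) ->
    derivable Gamma (Att (aimp A B)) -> derivable Gamma (Att B)
| d_R19o : forall C D, derivable Gamma (Obj (oimp C D)) ->
    derivable Gamma (Obj (oimp D C)) -> derivable Gamma (Obj (oiff C D))
| d_R19a : forall A B, derivable Gamma (Att (aimp A B)) ->
    derivable Gamma (Att (aimp B A)) -> derivable Gamma (Att (aiff A B))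
| d_R20o : forall C D E, derivable Gamma (Obj (oimp C D)) ->
    derivable Gamma (Obj (oimp D E)) -> derivable Gamma (Obj (oimp C E))
| d_R20a : forall A B E, derivable Gamma (Att (aimp A B)) ->
    derivable Gamma (Att (aimp B E)) -> derivable Gamma (Att (aimp A E))
| d_R21o_l : forall C D E, derivable Gamma (Obj (oimp C (OAnd D E))) ->
    derivable Gamma (Obj (oimp C D))
| d_R21o_r : forall C D E, derivable Gamma (Obj (oimp C (OAnd D E))) ->
    derivable Gamma (Obj (oimp C E))
| d_R21o_c : forall C D E, derivable Gamma (Obj (oimp C D)) ->
    derivable Gamma (Obj (oimp C E)) -> derivable Gamma (Obj (oimp C (OAnd D E)))
| d_R21a_l : forall A B E, derivable Gamma (Att (aimp A (AAnd B E))) ->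
    derivable Gamma (Att (aimp A B))
| d_R21a_r : forall A B E, derivable Gamma (Att (aimp A (AAnd B E))) ->
    derivable Gamma (Att (aimp A E))
| d_R21a_c : forall A B E, derivable Gamma (Att (aimp A B)) ->
    derivable Gamma (Att (aimp A E)) -> derivable Gamma (Att (aimp A (AAnd B E))).

From Stdlib Require Import Classical.

(** Pointwise, [C -> D] is the classical disjunction [~ C x \/ D x], so the
    propositional axioms and rules reduce to classical tautologies. The
    existential and universal restrictions [exists s.E], [forall s.E] are the
    diamond and box of the relation [s], and the modal axioms (A4)-(A15) hold
    for an arbitrary relation; (A16) and (A17) only use that [r^-] is the
    converse of [r]. *)

Section ClassicalImplication.

Variables P Q R : Prop.

Lemma or_not_K : ~ P \/ (~ Q \/ P).
Proof. destruct (classic P); tauto. Qed.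

Lemma or_not_S : ~ (~ P \/ (~ Q \/ R)) \/ (~ (~ P \/ Q) \/ (~ P \/ R)).
Proof. destruct (classic P); tauto. Qed.

Lemma or_not_contraposition : ~ (~ ~ P \/ ~ Q) \/ (~ Q \/ P).
Proof. destruct (classic P); tauto. Qed.

Lemma or_not_trans : ~ P \/ Q -> ~ Q \/ R -> ~ P \/ R.
Proof. tauto. Qed.

Lemma or_not_and_l : ~ P \/ (Q /\ R) -> ~ P \/ Q.
Proof. tauto. Qed.

Lemma or_not_and_r : ~ P \/ (Q /\ R) -> ~ P \/ R.
Proof. tauto. Qed.

Lemma or_not_and_intro : ~ P \/ Q -> ~ P \/ R -> ~ P \/ (Q /\ R).
Proof. tauto. Qed.

End ClassicalImplication.

Section Modalities.

Context {X Y : Type}.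

Definition dia (s : X -> Y -> Prop) (E : Y -> Prop) (x : X) : Prop :=
  exists y, s x y /\ E y.

Definition box (s : X -> Y -> Prop) (E : Y -> Prop) (x : X) : Prop :=
  forall y, s x y -> E y.

Variable s : X -> Y -> Prop.

Lemma dia_or (E F : Y -> Prop) (x : X) :
  dia s E x \/ dia s F x -> dia s (fun y => E y \/ F y) x.
Proof. intros [[y [Hxy HE]] | [y [Hxy HF]]]; exists y; tauto. Qed.

Lemma dia_and (E F : Y -> Prop) (x : X) :
  dia s (fun y => E y /\ F y) x -> dia s E x /\ dia s F x.
Proof. intros [y [Hxy [HE HF]]]; split; exists y; tauto. Qed.

Lemma dia_box_and (E F : Y -> Prop) (x : X) :
  dia s E x /\ box s F x -> dia s (fun y => E y /\ F y) x.
Proof. intros [[y [Hxy HE]] HF]; exists y; auto. Qed.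

End Modalities.

Lemma dia_converse_box {X Y : Type} (s : X -> Y -> Prop) (A : Y -> Prop) (y : Y) :
  dia (fun y x => s x y) (box s A) y -> A y.
Proof. intros [x [Hxy HA]]; exact (HA y Hxy). Qed.

Section Validity.

Variable M : model.

Lemma valid_oimp (C D : oconcept) :
  (forall x, oext M C x -> oext M D x) -> valid M (Obj (oimp C D)).
Proof. intros H x; exact (imply_to_or _ _ (H x)). Qed.

Lemma valid_aimp (A B : aconcept) :
  (forall y, aext M A y -> aext M B y) -> valid M (Att (aimp A B)).
Proof. intros H y; exact (imply_to_or _ _ (H y)). Qed.

End Validity.

Theorem theorem2 (Gamma : concept -> Prop) (phi : concept) :
  derivable Gamma phi -> entails Gamma phi.
Proof.
  intros Hd M HM; induction Hd.
  - exact (HM _ H).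
  - exact (fun _ => or_not_K _ _).
  - exact (fun _ => or_not_S _ _ _).
  - exact (fun _ => or_not_contraposition _ _).
  - exact (fun _ => or_not_K _ _).
  - exact (fun _ => or_not_S _ _ _).
  - exact (fun _ => or_not_contraposition _ _).
  - apply valid_oimp, dia_or.
  - apply valid_oimp, dia_and.
  - apply valid_oimp, dia_box_and.
  - apply valid_aimp, dia_or.
  - apply valid_aimp, dia_and.
  - apply valid_aimp, dia_box_and.
  - apply valid_oimp, dia_or.
  - apply valid_oimp, dia_and.
  - apply valid_oimp, dia_box_and.
  - apply valid_aimp, dia_or.
  - apply valid_aimp, dia_and.
  - apply valid_aimp, dia_box_and.
  - apply valid_aimp, dia_converse_box.
  - apply valid_oimp, dia_converse_box.
  - exact (fun x => or_to_imply _ _ (IHHd2 x) (IHHd1 x)).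
  - exact (fun y => or_to_imply _ _ (IHHd2 y) (IHHd1 y)).
  - exact (fun x => conj (IHHd1 x) (IHHd2 x)).
  - exact (fun y => conj (IHHd1 y) (IHHd2 y)).
  - exact (fun x => or_not_trans _ _ _ (IHHd1 x) (IHHd2 x)).
  - exact (fun y => or_not_trans _ _ _ (IHHd1 y) (IHHd2 y)).
  - exact (fun x => or_not_and_l _ _ _ (IHHd x)).
  - exact (fun x => or_not_and_r _ _ _ (IHHd x)).
  - exact (fun x => or_not_and_intro _ _ _ (IHHd1 x) (IHHd2 x)).
  - exact (fun y => or_not_and_l _ _ _ (IHHd y)).
  - exact (fun y => or_not_and_r _ _ _ (IHHd y)).
  - exact (fun y => or_not_and_intro _ _ _ (IHHd1 y) (IHHd2 y)).
Qed.
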